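(* Under the setting and assumptions in the context, let $\ell\neq z$ be two cluster indices with cluster natural frequencies $\omega_\ell,\omega_z$. Suppose $$|\omega_\ell-\omega_z|>2(m-2)\max_{k\neq\ell,z}\Big\{\sum_{r\in\mathcal P_k}a_{ir},\ \sum_{r\in\mathcal P_k}a_{jr}\Big\}$$ for some (equivalently, by (A3), any) $i\in\mathcal P_\ell$, $j\in\mathcal P_z$. Then there is no solution $\theta(\cdot)$ with $\theta(t)\in\mathcal S_{\mathcal P}$ for all $t\ge0$ along which the phases of clusters $\mathcal P_\ell$ and $\mathcal P_z$ coincide for all $t\ge0$. Consequently, if this inequality holds for every pair of clusters, no submanifold of $\mathcal S_{\mathcal P}$ on which two distinct clusters share the same phase is invariant.
   Context: **Graph and dynamics.** Let $\mathcal G=(\mathcal V,\mathcal E)$ be a connected, undirected, weighted graph with $\mathcal V=\{1,\dots,n\}$ and no self-loops. Its adjacency matrix $A=[a_{ij}]$ is symmetric, with $a_{ij}>0$ if $(i,j)\in\mathcal E$ and $0$ otherwise. The Kuramoto dynamics are $$\dot\theta_i=\omega_i+\sum_{j\neq i}a_{ij}\sin(\theta_j-\theta_i),$$ with $\theta_i\in\mathbb S^1$ and $\omega_i>0$. **Partition and manifold.** Let $\mathcal P=\{\mathcal P_1,\dots,\mathcal P_m\}$, $m>1$, be a partition of $\mathcal V$. The cluster synchronization manifold is $$\mathcal S_{\mathcal P}=\{\theta\in\mathbb T^n:\theta_i=\theta_j\ \text{for all } i,j\in\mathcal P_k,\ k=1,\dots,m\}.$$ **Standing assumptions.** - (A2)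 $\omega_i=\omega_j$ whenever $i,j$ lie in the same cluster; $\omega_k$ denotes the common value on $\mathcal P_k$. - (A3) $\sum_{k\in\mathcal P_\ell}(a_{ik}-a_{jk})=0$ for all $i,j\in\mathcal P_z$ and all $z\neq\ell$. *)

From Stdlib Require Import Reals Lra Lia List ZArith.
Open Scope R_scope.

(* Vertices are 0..n-1; clusters are 0..m-1; c i is the cluster index of vertex i. *)

Definition sum_filter (n : nat) (P : nat -> bool) (f : nat -> R) : R :=
  fold_right Rplus 0 (map f (filter P (seq 0 n))).

Definition clusterSum (n : nat) (a : nat -> nat -> R) (c : nat -> nat)
  (i k : nat) : R :=
  sum_filter n (fun r => Nat.eqb (c r) k) (fun r => a i r).

(* max over k in {0..m-1}, k <> l, k <> z, of max(clusterSum i k, clusterSum j k);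
   the max over an empty index set is taken to be 0 (all entries are >= 0). *)
Definition maxOtherClusterSum (n m : nat) (a : nat -> nat -> R) (c : nat -> nat)
  (l z i j : nat) : R :=
  fold_right Rmax 0
    (map (fun k => Rmax (clusterSum n a c i k) (clusterSum n a c j k))
       (filter (fun k => andb (negb (Nat.eqb k l)) (negb (Nat.eqb k z))) (seq 0 m))).

Inductive reach (n : nat) (a : nat -> nat -> R) : nat -> nat -> Prop :=
| reach_refl : forall i, (i < n)%nat -> reach n a i i
| reach_step : forall i j k, reach n a i j -> (k < n)%nat -> 0 < a j k ->
    reach n a i k.

Definition connected (n : nat) (a : nat -> nat -> R) : Prop :=
  forall i j, (i < n)%nat -> (j < n)%nat -> reach n a i j.

(* Equality of two angles on S^1 (represented by real lifts). *)
Definition angle_eq (x y : R) : Prop := exists k : Z, x - y = 2 * PI * IZR k.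

Definition kuramoto_rhs (n : nat) (a : nat -> nat -> R) (omega : nat -> R)
  (th : nat -> R) (i : nat) : R :=
  omega i + sum_filter n (fun j => negb (Nat.eqb j i))
                         (fun j => a i j * sin (th j - th i)).

Definition is_solution (n : nat) (a : nat -> nat -> R) (omega : nat -> R)
  (theta : R -> nat -> R) : Prop :=
  forall i, (i < n)%nat -> forall t, 0 < t ->
    derivable_pt_lim (fun s => theta s i) t (kuramoto_rhs n a omega (theta t) i).

Definition in_cluster_manifold (n : nat) (c : nat -> nat) (th : nat -> R) : Prop :=
  forall i j, (i < n)%nat -> (j < n)%nat -> c i = c j -> angle_eq (th i) (th j).

Definition clusters_coincide (n : nat) (c : nat -> nat) (l z : nat) (th : nat -> R)
  : Prop :=
  forall i j, (i < n)%nat -> (j < n)%nat -> c i = l -> c j = z ->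
    angle_eq (th i) (th j).

From Stdlib Require Import Reals List ZArith Lra Lia.
Open Scope R_scope.

(** If the phases of clusters [l] and [z] agree for all t >= 0, then for
    i in P_l, j in P_z the difference theta_i - theta_j stays in 2 pi Z; being
    differentiable, it is constant, so the right-hand sides of the Kuramoto
    equations at i and j agree.  On the cluster manifold, after removing the
    self-loops, this gives
      omega_i - omega_j = - sum_k sin(theta_k - theta_l) (S_ik - S_jk),
    where S_ik is the weight from i into cluster k.  The terms k = l, z vanish
    and each of the other m - 2 terms is at most max(S_ik, S_jk) in absolute
    value, which already contradicts the gap (half of the assumed bound
    suffices). *)

Definition sumR (L : list nat) (f : nat -> R) : R := fold_right Rplus 0 (map f L).

Definition maxR (L : list nat) (f : nat -> R) : R := fold_right Rmax 0 (map f L).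

Lemma sumR_app L1 L2 f : sumR (L1 ++ L2) f = sumR L1 f + sumR L2 f.
Proof. induction L1 as [|x L1 IH]; unfold sumR in *; simpl; [ring|]. rewrite IH; ring. Qed.

Lemma sumR_ext L f g : (forall x, In x L -> f x = g x) -> sumR L f = sumR L g.
Proof.
  induction L as [|x L IH]; intros H; [reflexivity|]. unfold sumR in *; simpl.
  rewrite (H x (or_introl eq_refl)), IH; [reflexivity|].
  intros y Hy; apply H; simpl; auto.
Qed.

Lemma sumR_eq_0 L f : (forall x, In x L -> f x = 0) -> sumR L f = 0.
Proof.
  induction L as [|x L IH]; intros H; unfold sumR in *; simpl; [reflexivity|].
  rewrite (H x (or_introl eq_refl)), IH by (intros; apply H; simpl; auto). ring.
Qed.

Lemma sumR_minus L f g : sumR L (fun x => f x - g x) = sumR L f - sumR L g.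
Proof. induction L as [|x L IH]; unfold sumR in *; simpl; [ring|]. rewrite IH; ring. Qed.

Lemma sumR_scal L s f : sumR L (fun x => s * f x) = s * sumR L f.
Proof. induction L as [|x L IH]; unfold sumR in *; simpl; [ring|]. rewrite IH; ring. Qed.

Lemma sumR_nonneg L f : (forall x, In x L -> 0 <= f x) -> 0 <= sumR L f.
Proof.
  induction L as [|x L IH]; intros H; unfold sumR in *; simpl; [lra|].
  assert (0 <= f x) by (apply H; simpl; auto).
  assert (0 <= fold_right Rplus 0 (map f L)) by (apply IH; intros; apply H; simpl; auto).
  lra.
Qed.

Lemma Rabs_sumR_le L f g : (forall x, In x L -> Rabs (f x) <= g x) -> Rabs (sumR L f) <= sumR L g.
Proof.
  induction L as [|x L IH]; intros H; unfold sumR in *; simpl.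
  - rewrite Rabs_R0; lra.
  - assert (Rabs (f x) <= g x) by (apply H; simpl; auto).
    assert (Rabs (fold_right Rplus 0 (map f L)) <= fold_right Rplus 0 (map g L))
      by (apply IH; intros; apply H; simpl; auto).
    pose proof (Rabs_triang (f x) (fold_right Rplus 0 (map f L))). lra.
Qed.

Lemma sumR_filter_vanish L P f :
  (forall x, In x L -> P x = false -> f x = 0) -> sumR (filter P L) f = sumR L f.
Proof.
  induction L as [|x L IH]; intros H; unfold sumR in *; simpl; [reflexivity|].
  rewrite <- IH by (intros; apply H; simpl; auto).
  destruct (P x) eqn:HP; simpl; [reflexivity|].
  rewrite H by (simpl; auto). ring.
Qed.

Lemma sumR_filter_orb L P Q f : (forall x, In x L -> andb (P x) (Q x) = false) ->
  sumR (filter P L) f + sumR (filter Q L) f = sumR (filter (fun x => orb (P x) (Q x)) L) f.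
Proof.
  induction L as [|x L IH]; intros H; unfold sumR in *; simpl; [ring|].
  assert (IH' := IH (fun y Hy => H y (or_intror Hy))).
  specialize (H x (or_introl eq_refl)).
  destruct (P x), (Q x); simpl in *; try discriminate; rewrite <- IH'; ring.
Qed.

Lemma sumR_partition L (c : nat -> nat) m f :
  sumR (seq 0 m) (fun k => sumR (filter (fun r => c r =? k) L) f) =
  sumR (filter (fun r => c r <? m) L) f.
Proof.
  induction m as [|m IH].
  - induction L as [|x L IHL]; [reflexivity|]. exact IHL.
  - rewrite seq_S, sumR_app, IH. unfold sumR at 2; simpl.
    rewrite Rplus_0_r, sumR_filter_orb.
    + f_equal. apply filter_ext. intros r.
      destruct (Nat.ltb_spec (c r) m), (Nat.eqb_spec (c r) m), (Nat.ltb_spec (c r) (S m));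
        simpl; lia.
    + intros r _. destruct (Nat.ltb_spec (c r) m), (Nat.eqb_spec (c r) m); simpl; lia.
Qed.

Lemma sumR_le_length_mul_maxR L f : sumR L f <= INR (length L) * maxR L f.
Proof.
  induction L as [|x L IH]; unfold sumR, maxR in *; [simpl; lra|].
  cbn [map fold_right length]; rewrite S_INR.
  set (M := fold_right Rmax 0 (map f L)) in *.
  pose proof (Rmax_l (f x) M). pose proof (Rmax_r (f x) M). pose proof (pos_INR (length L)).
  assert (INR (length L) * M <= INR (length L) * Rmax (f x) M) by (apply Rmult_le_compat_l; auto).
  lra.
Qed.

Lemma maxR_nonneg L f : 0 <= maxR L f.
Proof. induction L; unfold maxR in *; simpl; [lra|]. eapply Rle_trans; [apply IHL | apply Rmax_r]. Qed.

Lemma length_filter_seq_neq2 m l z : (l < m)%nat -> (z < m)%nat -> l <> z ->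
  length (filter (fun k => andb (negb (k =? l)) (negb (k =? z))) (seq 0 m)) = (m - 2)%nat.
Proof.
  intros Hl Hz Hlz.
  enough (forall p, length (filter (fun k => andb (negb (k =? l)) (negb (k =? z))) (seq 0 p))
            + (if l <? p then 1 else 0) + (if z <? p then 1 else 0) = p)%nat as Hp.
  { specialize (Hp m). apply Nat.ltb_lt in Hl, Hz. rewrite Hl, Hz in Hp. lia. }
  induction p as [|p IH]; [reflexivity|].
  rewrite seq_S, filter_app, length_app. simpl.
  destruct (Nat.eqb_spec p l), (Nat.eqb_spec p z), (Nat.ltb_spec l p), (Nat.ltb_spec z p),
    (Nat.ltb_spec l (S p)), (Nat.ltb_spec z (S p)); simpl in *; lia.
Qed.

Lemma Rabs_sub_le_Rmax x y : 0 <= x -> 0 <= y -> Rabs (x - y) <= Rmax x y.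
Proof. intros. unfold Rmax. destruct (Rle_dec x y); apply Rabs_le; lra. Qed.

Lemma angle_eq_sym x y : angle_eq x y -> angle_eq y x.
Proof. intros [k Hk]. exists (- k)%Z. rewrite opp_IZR. lra. Qed.

Lemma angle_eq_trans x y w : angle_eq x y -> angle_eq y w -> angle_eq x w.
Proof. intros [k Hk] [p Hp]. exists (k + p)%Z. rewrite plus_IZR. lra. Qed.

Lemma angle_eq_close_eq x y : angle_eq x y -> Rabs (x - y) < 2 * PI -> x = y.
Proof.
  intros [k Hk] Hclose. rewrite Hk, Rabs_mult, Rabs_right in Hclose by (pose proof PI_RGT_0; lra).
  assert (Hk1 : Rabs (IZR k) < 1).
  { pose proof PI_RGT_0. apply (Rmult_lt_reg_l (2 * PI)); lra. }
  apply Rabs_def2 in Hk1. destruct Hk1 as [Hk1 Hk2].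
  apply (lt_IZR k 1) in Hk1. apply (lt_IZR (-1) k) in Hk2.
  assert (k = 0%Z) as -> by lia. lra.
Qed.

Lemma sin_add_2PI_mult v k : sin (v + 2 * PI * IZR k) = sin v.
Proof.
  replace (2 * PI * IZR k) with (2 * (PI * IZR k)) by ring.
  rewrite sin_plus, cos_2a_sin.
  rewrite (sin_eq_0_1 (PI * IZR k)) by (exists k; ring).
  rewrite (sin_eq_0_1 (2 * (PI * IZR k))) by (exists (2 * k)%Z; rewrite mult_IZR; simpl; ring).
  ring.
Qed.

Lemma sin_angle_eq_0 x y : angle_eq x y -> sin (x - y) = 0.
Proof. intros [k ->]. rewrite <- (Rplus_0_l (2 * PI * IZR k)), sin_add_2PI_mult. apply sin_0. Qed.

Lemma sin_sub_angle_eq_l x y u : angle_eq x y -> sin (x - u) = sin (y - u).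
Proof.
  intros [k Hk]. replace (x - u) with ((y - u) + 2 * PI * IZR k) by lra.
  apply sin_add_2PI_mult.
Qed.

Lemma sin_sub_angle_eq_r x y u : angle_eq x y -> sin (u - x) = sin (u - y).
Proof.
  intros [k Hk]. replace (u - y) with ((u - x) + 2 * PI * IZR k) by lra.
  symmetry; apply sin_add_2PI_mult.
Qed.

Lemma derivable_pt_lim_right_const_0 f t0 l d : 0 < d ->
  (forall h, 0 < h < d -> f (t0 + h) = f t0) -> derivable_pt_lim f t0 l -> l = 0.
Proof.
  intros Hd Hconst Hder.
  destruct (Req_dec l 0) as [|Hl]; [assumption|exfalso].
  destruct (Hder (Rabs l) (Rabs_pos_lt l Hl)) as [d' Hd'].
  pose proof (cond_pos d') as Hd'0.
  set (h := Rmin d d' / 2).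
  assert (Hh : 0 < h < d /\ h < d') by (unfold h; pose proof (Rmin_l d d'); pose proof (Rmin_r d d');
    pose proof (Rmin_pos d d' Hd Hd'0); lra).
  specialize (Hd' h ltac:(lra) ltac:(rewrite Rabs_right; lra)).
  rewrite Hconst, Rminus_diag, Rdiv_0_l, Rminus_0_l, Rabs_Ropp in Hd' by lra.
  lra.
Qed.

Lemma derivable_pt_lim_angle_locked f t0 l : 0 < t0 ->
  (forall t, 0 <= t -> angle_eq (f t) 0) -> derivable_pt_lim f t0 l -> l = 0.
Proof.
  intros Ht0 Hlock Hder.
  assert (Hcont : continuity_pt f t0) by exact (derivable_continuous_pt f t0 (exist _ l Hder)).
  destruct (Hcont (2 * PI) ltac:(pose proof PI_RGT_0; lra)) as [d [Hd Hnear]].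
  apply (derivable_pt_lim_right_const_0 f t0 l d Hd); [|exact Hder].
  intros h Hh. apply angle_eq_close_eq.
  - apply (angle_eq_trans _ 0); [|apply angle_eq_sym]; apply Hlock; lra.
  - apply (Hnear (t0 + h)). split.
    + split; [exact I | lra].
    + simpl; unfold R_dist. rewrite Rabs_right; lra.
Qed.

Lemma kuramoto_rhs_sub_locked n a omega th i j :
  a i i = 0 -> a j j = 0 -> angle_eq (th i) (th j) ->
  kuramoto_rhs n a omega th i - kuramoto_rhs n a omega th j =
  omega i - omega j + sumR (seq 0 n) (fun r => (a i r - a j r) * sin (th r - th i)).
Proof.
  intros Hii Hjj Hij. unfold kuramoto_rhs.
  change (sum_filter n ?P ?f) with (sumR (filter P (seq 0 n)) f).
  change (sum_filter n ?P ?f) with (sumR (filter P (seq 0 n)) f).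
  rewrite !sumR_filter_vanish by
    (intros r _; destruct (Nat.eqb_spec r i), (Nat.eqb_spec r j); subst; simpl;
     try discriminate; intros; rewrite ?Hii, ?Hjj; ring).
  rewrite (sumR_ext _ (fun r => a j r * sin (th r - th j)) (fun r => a j r * sin (th r - th i)))
    by (intros r _; rewrite (sin_sub_angle_eq_r _ _ _ Hij); reflexivity).
  rewrite (sumR_ext _ (fun r => (a i r - a j r) * sin (th r - th i))
             (fun r => a i r * sin (th r - th i) - a j r * sin (th r - th i)))
    by (intros; ring).
  rewrite sumR_minus. ring.
Qed.

Section ClusterCoupling.

Variables (n m : nat) (a : nat -> nat -> R) (c : nat -> nat) (th : nat -> R).

Hypothesis a_nonneg : forall i j, (i < n)%nat -> (j < n)%nat -> 0 <= a i j.
Hypothesis cluster_lt : forall r, (r < n)%nat -> (c r < m)%nat.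
Hypothesis cluster_nonempty : forall k, (k < m)%nat -> exists r, (r < n)%nat /\ c r = k.
Hypothesis th_in_manifold : in_cluster_manifold n c th.

Lemma cluster_coupling_eq_0 i j k :
  (forall r, (r < n)%nat -> c r = k -> angle_eq (th r) (th i)) ->
  sumR (filter (fun r => c r =? k) (seq 0 n)) (fun r => (a i r - a j r) * sin (th r - th i)) = 0.
Proof.
  intros Hk. apply sumR_eq_0. intros r Hr. apply filter_In in Hr as [Hr Hcr].
  apply in_seq in Hr. apply Nat.eqb_eq in Hcr.
  rewrite sin_angle_eq_0 by (apply Hk; auto; lia). ring.
Qed.

Lemma Rabs_cluster_coupling_le i j k : (i < n)%nat -> (j < n)%nat -> (k < m)%nat ->
  Rabs (sumR (filter (fun r => c r =? k) (seq 0 n))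
          (fun r => (a i r - a j r) * sin (th r - th i)))
  <= Rmax (clusterSum n a c i k) (clusterSum n a c j k).
Proof.
  intros Hi Hj Hk. destruct (cluster_nonempty k Hk) as [rk [Hrk Hcrk]].
  (* on cluster k every phase is that of rk, so the sine factors out *)
  rewrite (sumR_ext _ _ (fun r => sin (th rk - th i) * (a i r - a j r))).
  2:{ intros r Hr. apply filter_In in Hr as [Hr Hcr].
      apply in_seq in Hr. apply Nat.eqb_eq in Hcr.
      rewrite (sin_sub_angle_eq_l (th r) (th rk)) by (apply th_in_manifold; lia). ring. }
  rewrite sumR_scal, sumR_minus, Rabs_mult.
  change (sumR _ (a i)) with (clusterSum n a c i k).
  change (sumR _ (a j)) with (clusterSum n a c j k).
  rewrite <- Rmult_1_l. apply Rmult_le_compat; try apply Rabs_pos.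
  - apply Rabs_le, SIN_bound.
  - apply Rabs_sub_le_Rmax; apply sumR_nonneg; intros r Hr;
      apply filter_In in Hr as [Hr _]; apply in_seq in Hr; apply a_nonneg; lia.
Qed.

Lemma Rabs_coupling_difference_le i j l z :
  (i < n)%nat -> (j < n)%nat -> c i = l -> c j = z -> (l < m)%nat -> (z < m)%nat -> l <> z ->
  clusters_coincide n c l z th ->
  Rabs (sumR (seq 0 n) (fun r => (a i r - a j r) * sin (th r - th i)))
  <= INR (m - 2) * maxOtherClusterSum n m a c l z i j.
Proof.
  intros Hi Hj Hci Hcj Hl Hz Hlz Hco.
  set (other := fun k => andb (negb (k =? l)) (negb (k =? z))).
  set (V := fun k => Rmax (clusterSum n a c i k) (clusterSum n a c j k)).
  rewrite <- (sumR_filter_vanish _ (fun r => c r <? m)).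
  2:{ intros r Hr Hcr. apply in_seq in Hr. apply Nat.ltb_ge in Hcr.
      specialize (cluster_lt r ltac:(lia)). lia. }
  rewrite <- sumR_partition, <- (sumR_filter_vanish _ other).
  2:{ intros k _ Hk. unfold other in Hk; simpl in Hk.
      apply cluster_coupling_eq_0. intros r Hr Hcr.
      destruct (Nat.eqb_spec k l); [apply th_in_manifold; congruence|].
      destruct (Nat.eqb_spec k z); [|discriminate].
      apply angle_eq_sym, Hco; congruence. }
  rewrite <- (length_filter_seq_neq2 m l z Hl Hz Hlz).
  eapply Rle_trans; [apply (Rabs_sumR_le _ _ V) | apply sumR_le_length_mul_maxR].
  intros k Hk. apply filter_In in Hk as [Hk _]. apply in_seq in Hk.
  apply Rabs_cluster_coupling_le; lia.
Qed.

End ClusterCoupling.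

Theorem mainTheorem9
  (n m : nat) (a : nat -> nat -> R) (omega : nat -> R) (c : nat -> nat)
  (Hsym : forall i j, (i < n)%nat -> (j < n)%nat -> a i j = a j i)
  (Hnn : forall i j, (i < n)%nat -> (j < n)%nat -> 0 <= a i j)
  (Hloop : forall i, (i < n)%nat -> a i i = 0)
  (Hconn : connected n a)
  (Homega : forall i, (i < n)%nat -> 0 < omega i)
  (Hm : (1 < m)%nat)
  (Hc : forall i, (i < n)%nat -> (c i < m)%nat)
  (Hne : forall k, (k < m)%nat -> exists i, (i < n)%nat /\ c i = k)
  (HA2 : forall i j, (i < n)%nat -> (j < n)%nat -> c i = c j -> omega i = omega j)
  (HA3 : forall zz ll i j, (i < n)%nat -> (j < n)%nat -> c i = zz -> c j = zz ->
     zz <> ll ->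
     sum_filter n (fun r => Nat.eqb (c r) ll) (fun r => a i r - a j r) = 0)
  (l z : nat) (Hl : (l < m)%nat) (Hz : (z < m)%nat) (Hlz : l <> z)
  (Hgap : exists i j, (i < n)%nat /\ (j < n)%nat /\ c i = l /\ c j = z /\
     Rabs (omega i - omega j) >
       2 * INR (m - 2) * maxOtherClusterSum n m a c l z i j) :
  ~ exists theta : R -> nat -> R,
      is_solution n a omega theta /\
      (forall t, 0 <= t -> in_cluster_manifold n c (theta t)) /\
      (forall t, 0 <= t -> clusters_coincide n c l z (theta t)).
Proof.
  intros [theta [Hsol [Hman Hco]]].
  destruct Hgap as [i [j [Hi [Hj [Hci [Hcj Hgap]]]]]].
  assert (Hlock : forall t, 0 <= t -> angle_eq (theta t i) (theta t j))
    by (intros t Ht; apply Hco; auto).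
  assert (Hstill : kuramoto_rhs n a omega (theta 1) i - kuramoto_rhs n a omega (theta 1) j = 0).
  { apply (derivable_pt_lim_angle_locked (fun t => theta t i - theta t j) 1); [lra| |].
    - intros t Ht. destruct (Hlock t Ht) as [k Hk]. exists k. lra.
    - apply derivable_pt_lim_minus; apply Hsol; auto; lra. }
  rewrite kuramoto_rhs_sub_locked in Hstill by (auto; apply Hlock; lra).
  assert (Hbound := Rabs_coupling_difference_le n m a c (theta 1) Hnn Hc Hne
                      (Hman 1 ltac:(lra)) i j l z Hi Hj Hci Hcj Hl Hz Hlz (Hco 1 ltac:(lra))).
  assert (Habs : Rabs (omega i - omega j)
                 = Rabs (sumR (seq 0 n) (fun r => (a i r - a j r) * sin (theta 1 r - theta 1 i))))
    by (rewrite <- Rabs_Ropp; f_equal; lra).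
  assert (0 <= INR (m - 2) * maxOtherClusterSum n m a c l z i j)
    by (apply Rmult_le_pos; [apply pos_INR | apply maxR_nonneg]).
  rewrite Rmult_assoc in Hgap. lra.
Qed.
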